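(* Let a language model $M$ produce $L$ responses $g_1,\dots,g_L$ to a single prompt, where response $g_i$ has final answer $s_i$, and let a verifier (process reward model) $V$ assign to each $g_i$ a scalar score $p_i$. Let $\mathcal{A}=\{\alpha_1,\dots,\alpha_m\}$ (with $m\ge 2$) be the set of distinct candidate answers. For a hypothesized true answer $\alpha_k\in\mathcal{A}$, set $c_i=1$ if $s_i=\alpha_k$ and $c_i=0$ otherwise. Assume the following model of the evidence given $\alpha_k$: (i) (Score and generation independence) $P(\mathcal{P}\mid \mathcal{G},\alpha_k,V)=\prod_{i=1}^L P(p_i\mid g_i,\alpha_k,V)$ and $P(\mathcal{G}\mid \alpha_k,M)=\prod_{i=1}^L P(g_i\mid \alpha_k,M)$, where $\mathcal{G}=\{g_1,\dots,g_L\}$ and $\mathcal{P}=\{p_1,\dots,p_L\}$, and the joint likelihood factors as $P(\mathcal{G},\mathcal{P}\mid\alpha_k,M,V)=P(\mathcal{P}\mid\mathcal{G},\alpha_k,V)\,P(\mathcal{G}\mid\alpha_k,M)$; (ii) the score likelihood depends on $g_i$ and $\alpha_k$ only through the correctness indicator, i.e. $P(p_i\mid g_i,\alpha_k,V)=P(p_i\mid c_i,V)$, with $P(p_i\mid c_i=1,V)>0$ and $P(p_i\mid c_i=0,V)>0$; (iii) $P(g_i\mid\alpha_k,M)=P(s_i\mid\alpha_k,M)$, where $P(s_i=\alpha_k\mid\alpha_k,M)=q_M$ and $P(s_i=\alpha\mid\alpha_k,M)=(1-q_M)/(m-1)$ for each $\alpha\in\mathcal{A}$ with $\alpha\neq\alpha_k$,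 for some $q_M\in(0,1)$ not depending on $k$. Define the log-likelihood $\mathrm{LL}(\alpha_k)=\sum_{i=1}^L\log P(p_i\mid g_i,\alpha_k,V)+\sum_{i=1}^L\log P(g_i\mid\alpha_k,M)$. Then maximizing $\mathrm{LL}(\alpha_k)$ over $\alpha_k\in\mathcal{A}$ is equivalent to maximizing $$\mathrm{Score}(\alpha_k)=\sum_{i:\,s_i=\alpha_k} w_i,\qquad w_i=\log\frac{P(p_i\mid c_i=1,V)}{P(p_i\mid c_i=0,V)}+\log\frac{q_M\,(m-1)}{1-q_M},$$ i.e. $\arg\max_{\alpha_k\in\mathcal{A}}\mathrm{LL}(\alpha_k)=\arg\max_{\alpha_k\in\mathcal{A}}\mathrm{Score}(\alpha_k)$.
   Context: In this setting, the goal is maximum a posteriori selection of the true answer; with a uniform prior over the candidate answers in $\mathcal{A}$, this is the same as maximizing the likelihood $P(\mathcal{G},\mathcal{P}\mid\alpha_k,M,V)$. In $w_i$, the quantity $P(p_i\mid c_i=1,V)$ (resp. $P(p_i\mid c_i=0,V)$) denotes the likelihood (density) of the verifier producing score $p_i$ for a correct (resp. incorrect) response. *)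

From HB Require Import structures.
From mathcomp Require Import all_boot all_order all_algebra.
From mathcomp Require Import all_classical all_reals all_analysis.
Set Implicit Arguments. Unset Strict Implicit. Unset Printing Implicit Defensive.
Import Order.TTheory GRing.Theory Num.Theory.
Local Open Scope ring_scope.

Definition is_argmax (A : finType) (R : realType) (f : A -> R) (a : A) : Prop :=
  forall b : A, f b <= f a.

(* LL(alpha_k) = sum_i log P(p_i | g_i, alpha_k, V) + sum_i log P(g_i | alpha_k, M),
   with Pp i a = P(p_i | g_i, a, V) and Pg i a = P(g_i | a, M). *)
Definition LL (R : realType) (A : finType) (L : nat)
  (Pp Pg : 'I_L -> A -> R) (a : A) : R :=
  \sum_(i < L) ln (Pp i a) + \sum_(i < L) ln (Pg i a).

Definition weight (R : realType) (L : nat) (f1 f0 : 'I_L -> R) (q : R) (m : nat)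
  (i : 'I_L) : R :=
  ln (f1 i / f0 i) + ln (q * (m.-1)%:R / (1 - q)).

Definition Score (R : realType) (A : finType) (L : nat) (s : 'I_L -> A)
  (w : 'I_L -> R) (a : A) : R :=
  \sum_(i < L | s i == a) w i.

From HB Require Import structures.
From mathcomp Require Import all_boot all_order all_algebra.
From mathcomp Require Import all_classical all_reals all_analysis.
Import Order.TTheory GRing.Theory Num.Theory.
Local Open Scope ring_scope.

(* Each log-likelihood term takes one of two positive values according to
   whether s_i equals the hypothesized answer.  Writing it as its "wrong
   answer" value plus a log-odds correction that is present only when
   s_i = a, LL(a) becomes a constant independent of a plus the sum of the
   corrections over {i | s_i = a}, which is Score(a); adding a constant
   does not move the maximizers. *)

Lemma is_argmax_shift (A : finType) (R : realType) (f g : A -> R) (C : R) :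
  (forall b, f b = C + g b) -> forall a, is_argmax f a <-> is_argmax g a.
Proof.
by move=> fE a; split=> max_a b; have := max_a b; rewrite !fE lerD2l.
Qed.

Lemma ln_if (R : realType) (b : bool) (x1 x0 : R) : 0 < x1 -> 0 < x0 ->
  ln (if b then x1 else x0) = ln x0 + (if b then ln (x1 / x0) else 0).
Proof.
by move=> x1_gt0 x0_gt0; case: b; rewrite ?addr0 // ln_div ?posrE // addrC subrK.
Qed.

Section LogLikelihood.

Variables (R : realType) (A : finType) (L : nat) (s : 'I_L -> A).
Variables (Pp Pg : 'I_L -> A -> R) (f1 f0 : 'I_L -> R) (q : R).
Hypotheses (A_gt1 : (1 < #|A|)%N) (q_gt0 : 0 < q) (q_lt1 : q < 1).
Hypotheses (f1_gt0 : forall i, 0 < f1 i) (f0_gt0 : forall i, 0 < f0 i).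

Let c : R := (1 - q) / (#|A|.-1)%:R.

Hypothesis PpE : forall i a, Pp i a = if s i == a then f1 i else f0 i.
Hypothesis PgE : forall i a, Pg i a = if s i == a then q else c.

Lemma wrong_answer_prob_gt0 : 0 < c.
Proof.
rewrite divr_gt0 ?subr_gt0 // ltr0n.
by case: #|A| A_gt1 => [|[|n]].
Qed.

Lemma LL_Score (a : A) :
  LL Pp Pg a = \sum_(i < L) (ln (f0 i) + ln c) + Score s (weight f1 f0 q #|A|) a.
Proof.
have c_gt0 := wrong_answer_prob_gt0.
have prior_oddsE : q * (#|A|.-1)%:R / (1 - q) = q / c by rewrite invf_div mulrA.
rewrite /LL /Score -big_split [X in _ = _ + X]big_mkcond -big_split /=.
apply: eq_bigr => i _; rewrite PpE PgE !ln_if // /weight prior_oddsE.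
by case: (s i == a); rewrite ?addr0 // addrACA.
Qed.

End LogLikelihood.

Theorem theorem3p2 (R : realType) (A : finType) (L : nat) (s : 'I_L -> A)
  (Pp Pg : 'I_L -> A -> R) (f1 f0 : 'I_L -> R) (q : R) :
  (1 < #|A|)%N ->
  0 < q -> q < 1 ->
  (forall i, 0 < f1 i) -> (forall i, 0 < f0 i) ->
  (forall i a, Pp i a = if s i == a then f1 i else f0 i) ->
  (forall i a, Pg i a = if s i == a then q else (1 - q) / (#|A|.-1)%:R) ->
  forall a : A,
    is_argmax (LL Pp Pg) a <-> is_argmax (Score s (weight f1 f0 q #|A|)) a.
Proof.
move=> A_gt1 q_gt0 q_lt1 f1_gt0 f0_gt0 PpE PgE.
apply: is_argmax_shift => b.
exact: LL_Score.
Qed.
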